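(* Let $S_{r,N}$ be a nontrivial atomic exponential Puiseux semiring. Then for every $k\in\mathbb{N}$ and every positive integer $n$, $r^{s_k}$ does not divide $\sum_{i=1}^{n}r^{s_{k+i}}$ in $S_{r,N}$. Consequently, $S_{r,N}$ is not strongly primary.
   Context: $\mathbb{N}=\{0,1,2,\dots\}$. A numerical monoid $N$ is an additive submonoid of $\mathbb{N}$ with finite complement; let $s_0<s_1<\cdots$ be its elements. For $r\in\mathbb{Q}_{>0}$ write $r=\mathsf{n}(r)/\mathsf{d}(r)$ in lowest terms. $S_{r,N}$ is the additive submonoid of $\mathbb{Q}_{\ge0}$ generated by $\{r^k:k\in N\}$; nontrivial means $r\notin\mathbb{N}$, and then it is atomic iff $\mathsf{n}(r)>1$. In a monoid $M$, $y\mid_M w$ means $w-y\in M$. A (commutative, cancellative) monoid $M$ with group of units $M^\times$ is strongly primary if $M\neq M^\times$ and for every $x\in M\setminus M^\times$ there exists $n\in\mathbb{N}$ such that every sum of $n$ elements of $M\setminus M^\times$ is divisible by $x$ (i.e., $(M\setminus M^\times)^n\subseteq x+M$ in additive notation). *)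

From mathcomp Require Import all_boot all_order all_algebra.
Set Implicit Arguments. Unset Strict Implicit. Unset Printing Implicit Defensive.
Import Order.TTheory GRing.Theory Num.Theory.
Local Open Scope ring_scope.

Definition numerical_monoid (N : nat -> Prop) : Prop :=
  [/\ N 0%N, (forall a b, N a -> N b -> N (a + b)%N)
    & exists b : nat, forall n, (b <= n)%N -> N n].

Definition enumerates (N : nat -> Prop) (s : nat -> nat) : Prop :=
  (forall k, (s k < s k.+1)%N) /\ (forall x, N x <-> exists k, s k = x).

(* S_{r,N}: the additive submonoid of Q_{>=0} generated by {r^k : k in N}. *)
Inductive in_SrN (r : rat) (N : nat -> Prop) : rat -> Prop :=
  | SrN0 : in_SrN r N 0
  | SrN_add k x : N k -> in_SrN r N x -> in_SrN r N (r ^+ k + x).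

Definition is_unit (M : rat -> Prop) (x : rat) : Prop := M x /\ M (- x).

Definition mdivides (M : rat -> Prop) (y w : rat) : Prop := M (w - y).

Definition is_atom (M : rat -> Prop) (x : rat) : Prop :=
  [/\ M x, ~ is_unit M x &
     forall y z, M y -> M z -> x = y + z -> is_unit M y \/ is_unit M z].

Definition atomic (M : rat -> Prop) : Prop :=
  forall x, M x -> ~ is_unit M x ->
    exists s : seq rat, (forall a, a \in s -> is_atom M a) /\ x = \sum_(a <- s) a.

Definition strongly_primary (M : rat -> Prop) : Prop :=
  (exists x, M x /\ ~ is_unit M x) /\
  forall x, M x -> ~ is_unit M x ->
    exists n : nat, forall a : nat -> rat,
      (forall i, (i < n)%N -> M (a i) /\ ~ is_unit M (a i)) ->
      mdivides M x (\sum_(i < n) a i).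

From mathcomp Require Import all_boot all_order all_algebra zify ring lra.
Import Order.TTheory GRing.Theory Num.Theory.
Local Open Scope ring_scope.

(* Write r = a/b in lowest terms; b >= 2 because r is not an integer.  Suppose
   r^(s_k) divides T := r^(s_(k+1)) + ... + r^(s_(k+n)) in S_{r,N}.  Every
   element of S_{r,N} is a finite sum of powers of r, so T = r^(s_k) + sum_R r^t.
   - If a = 1, then r <= 1/2 and, since s is strictly increasing, T is bounded
     by a geometric tail: T <= r^(s_k) (1 - r^n) < r^(s_k), a contradiction.
   - If a >= 2, comparing multiplicities of exponents gives a relation
     sum_e p_e r^e = 0 with integer coefficients p_e <= 1 (the exponents of T
     are distinct) and p_(s_k) <= -1.  Clearing denominators and peeling off
     the top coefficient with Gauss's lemma (b is coprime to a) shows that such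
     a relation must have all p_e = 0, again a contradiction.
   Atomicity (n(r) >= 2) is not needed: the case n(r) = 1 is covered too.
   Strong primality fails because, for every n, the sum of the n non-units
   r^(s_1), ..., r^(s_n) is not divisible by the non-unit r^(s_0). *)

Lemma in_SrN_sum (r : rat) (N : nat -> Prop) (x : rat) :
  in_SrN r N x -> exists R : seq nat, x = \sum_(t <- R) r ^+ t.
Proof.
elim=> [|k y _ _ [R ->]]; first by exists [::]; rewrite big_nil.
by exists (k :: R); rewrite big_cons.
Qed.

Lemma in_SrN_ge0 (r : rat) (N : nat -> Prop) (x : rat) :
  0 <= r -> in_SrN r N x -> 0 <= x.
Proof.
by move=> r_ge0 /in_SrN_sum [R ->]; apply: sumr_ge0 => t _; apply: exprn_ge0.
Qed.

Lemma denq_ge2 (r : rat) :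
  0 < r -> ~ (exists m : nat, r = m%:R) -> 2 <= denq r.
Proof.
move=> r_gt0 r_notnat; have := denq_gt0 r.
have [den1|] := eqVneq (denq r) 1; last by lia.
exfalso; apply: r_notnat; exists `|numq r|%N.
by rewrite -[LHS]divq_num_den den1 divr1 -[numq r]gtr0_norm ?numq_gt0 // -abszE.
Qed.

Lemma geometric_tail (r : rat) (n : nat) :
  0 <= r -> 2 * r <= 1 -> \sum_(1 <= i < n.+1) r ^+ i <= 1 - r ^+ n.
Proof.
move=> r_ge0 r_half; elim: n => [|n IH]; first by rewrite big_geq // expr0 subrr.
rewrite big_nat_recr //= exprS.
have : 0 <= r ^+ n by apply: exprn_ge0.
nra.
Qed.

Lemma increasing_tail_lt (r : rat) (s : nat -> nat) (k n : nat) :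
  0 < r -> 2 * r <= 1 -> (forall j, (s j < s j.+1)%N) -> (0 < n)%N ->
  \sum_(1 <= i < n.+1) r ^+ s (k + i)%N < r ^+ s k.
Proof.
move=> r_gt0 r_half s_incr n_gt0.
have r_le1 : r <= 1 by lra.
have s_shift i : (s k + i <= s (k + i))%N.
  elim: i => [|i IH]; first by rewrite !addn0.
  by rewrite !addnS; apply: leq_ltn_trans IH (s_incr _).
have tail_le : \sum_(1 <= i < n.+1) r ^+ s (k + i)%N <= r ^+ s k * (1 - r ^+ n).
  apply: le_trans (_ : \sum_(1 <= i < n.+1) r ^+ (s k + i) <= _).
    by apply: ler_sum => i _; exact: (ler_wiXn2l (ltW r_gt0) r_le1 (s_shift i)).
  under eq_bigr => i _ do rewrite exprD.
  rewrite -mulr_sumr ler_pM2l ?exprn_gt0 //.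
  exact: geometric_tail n (ltW r_gt0) r_half.
have : 0 < r ^+ s k * r ^+ n by rewrite mulr_gt0 ?exprn_gt0.
lra.
Qed.

Lemma sum_powers_by_multiplicity (r : rat) (M : nat) (l : seq nat) :
  all (fun t => t <= M)%N l ->
  \sum_(t <- l) r ^+ t = \sum_(e < M.+1) (count_mem (e : nat) l)%:R * r ^+ e.
Proof.
elim: l => [|x l IH] /=; first by rewrite big_nil big1 // => e _; rewrite mul0r.
move=> /andP [x_le l_le]; rewrite big_cons IH //.
under [in RHS]eq_bigr => e _ do rewrite natrD mulrDl.
rewrite big_split /=; congr (_ + _).
have x_lt : (x < M.+1)%N by [].
rewrite (bigD1 (Ordinal x_lt)) //= eqxx mul1r big1 ?addr0 // => e e_neq.
suff /negbTE -> : x != e :> nat by rewrite mul0r.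
by apply: contra e_neq => /eqP x_eq; apply/eqP/val_inj.
Qed.

Lemma clear_denominators (a b : int) (p : nat -> int) (M : nat) : b != 0 ->
  \sum_(e < M.+1) (p e)%:~R * ((a%:~R / b%:~R : rat) ^+ e) = 0 ->
  \sum_(e < M.+1) p e * a ^+ e * b ^+ (M - e) = 0.
Proof.
move=> b_neq0 rel; apply/eqP; rewrite -(intr_eq0 rat) rmorph_sum /=.
suff -> : \sum_(e < M.+1) ((p e * a ^+ e * b ^+ (M - e))%:~R : rat)
   = b%:~R ^+ M * \sum_(e < M.+1) (p e)%:~R * ((a%:~R / b%:~R : rat) ^+ e).
  by rewrite rel mulr0.
rewrite mulr_sumr; apply: eq_bigr => e _.
have e_le : (e <= M)%N by rewrite -ltnS.
rewrite !rmorphM !rmorphXn /= expr_div_n.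
have -> : (b%:~R : rat) ^+ M = b%:~R ^+ (M - e) * b%:~R ^+ e by rewrite -exprD subnK.
have : (b%:~R : rat) ^+ e != 0 by rewrite expf_neq0 // intr_eq0.
by move=> *; field.
Qed.

Lemma small_plus_nonpos_multiple_eq0 (p c a : int) :
  2 <= a -> p <= 1 -> c <= 0 -> p + c * a = 0 -> c = 0 /\ p = 0.
Proof.
move=> a_ge2 p_le1 c_le0 eq0.
have [c0 | c_neq0] := eqVneq c 0; first by split=> //; rewrite -eq0 c0 mul0r addr0.
have : (c + 1) * a <= 0 by rewrite mulr_le0_ge0 //; lia.
lia.
Qed.

Lemma small_plus_nonpos_multiple_quotient (p c a b c' : int) :
  2 <= a -> 2 <= b -> p <= 1 -> c <= 0 -> p + c * a = c' * b -> c' <= 0.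
Proof.
move=> a_ge2 b_ge2 p_le1 c_le0 eq_cb.
have : c * a <= 0 by rewrite mulr_le0_ge0 //; lia.
nia.
Qed.

(* Induction on M: in degree M+1, b divides (p_(M+1) + c a) a^(M+1),
   hence p_(M+1) + c a = c' b with c' <= 0, leaving a relation of degree M. *)
Lemma homogeneous_relation_trivial (a b : int) :
  2 <= a -> 2 <= b -> coprimez b a ->
  forall (M : nat) (p : nat -> int) (c : int), c <= 0 ->
  (forall e, (e <= M)%N -> p e <= 1) ->
  \sum_(e < M.+1) p e * a ^+ e * b ^+ (M - e) + c * a ^+ M.+1 = 0 ->
  c = 0 /\ forall e, (e <= M)%N -> p e = 0.
Proof.
move=> a_ge2 b_ge2 coprime_ba; elim=> [|M IH] p c c_le0 p_le1.
  rewrite big_ord1 /= !expr0 expr1 !mulr1 => rel.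
  have [c0 p0] := small_plus_nonpos_multiple_eq0 _ _ _ a_ge2 (p_le1 0%N (leqnn _)) c_le0 rel.
  by split=> [//|e]; rewrite leqn0 => /eqP ->.
rewrite big_ord_recr /= subnn expr0 mulr1.
set X := \sum_(e < M.+1) p e * a ^+ e * b ^+ (M - e).
have -> : \sum_(i < M.+1) p (widen_ord (leqnSn M.+1) i) * a ^+ i * b ^+ (M.+1 - i)
    = b * X.
  rewrite mulr_sumr; apply: eq_bigr => i _ /=.
  have i_le : (i <= M)%N by rewrite -ltnS.
  by rewrite subSn // exprS mulrCA mulrA.
move=> rel; set v := p M.+1 + c * a.
have rel_v : v * a ^+ M.+1 + b * X = 0 by rewrite -rel /v !exprS; ring.
have /dvdzP [c' v_eq] : (b %| v)%Z.
  rewrite -(Gauss_dvdzl _ (coprimezXr M.+1 coprime_ba)).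
  have -> : v * a ^+ M.+1 = b * - X by apply/eqP; rewrite mulrN -addr_eq0 rel_v.
  exact: dvdz_mulr (dvdzz b).
have p_top_le1 := p_le1 M.+1 (leqnn _).
have c'_le0 := small_plus_nonpos_multiple_quotient _ _ _ _ _ a_ge2 b_ge2 p_top_le1 c_le0 v_eq.
have rel' : X + c' * a ^+ M.+1 = 0.
  have : b * (X + c' * a ^+ M.+1) = 0 by rewrite mulrDr -rel_v v_eq; ring.
  by move/eqP; rewrite mulf_eq0 => /orP [/eqP b0|/eqP //]; move: b_ge2; rewrite b0.
have [c'0 p_low0] := IH p c' c'_le0 (fun e e_le => p_le1 e (leqW e_le)) rel'.
have v0 : v = 0 by rewrite v_eq c'0 mul0r.
have [c0 p_top0] := small_plus_nonpos_multiple_eq0 _ _ _ a_ge2 p_top_le1 c_le0 v0.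
split=> [//|e]; rewrite leq_eqVlt => /orP [/eqP -> //|e_lt].
exact: p_low0.
Qed.

Lemma power_relation_trivial (r : rat) (M : nat) (p : nat -> int) :
  2 <= numq r -> 2 <= denq r -> (forall e, (e <= M)%N -> p e <= 1) ->
  \sum_(e < M.+1) (p e)%:~R * r ^+ e = 0 ->
  forall e, (e <= M)%N -> p e = 0.
Proof.
move=> num_ge2 den_ge2 p_le1; rewrite -{1}[r]divq_num_den => /clear_denominators.
move=> /(_ (lt0r_neq0 (denq_gt0 r))) rel.
have coprime_dn : coprimez (denq r) (numq r).
  by rewrite /coprimez /gcdz gcdnC; exact: coprime_num_den.
have rel0 : \sum_(e < M.+1) p e * numq r ^+ e * denq r ^+ (M - e)
            + 0 * numq r ^+ M.+1 = 0 by rewrite mul0r addr0.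
by have [_] := homogeneous_relation_trivial _ _ num_ge2 den_ge2 coprime_dn M p 0 (lexx 0) p_le1 rel0.
Qed.

Lemma distinct_powers_rigid (r : rat) (L R : seq nat) (x : nat) :
  2 <= numq r -> 2 <= denq r -> uniq L -> x \notin L ->
  \sum_(t <- L) r ^+ t != r ^+ x + \sum_(t <- R) r ^+ t.
Proof.
move=> num_ge2 den_ge2 L_uniq x_notin; apply/eqP => sum_eq.
set M := \max_(t <- L ++ x :: R) t.
have bounded t : t \in L ++ x :: R -> (t <= M)%N by move=> t_in; exact: leq_bigmax_seq.
have L_le : all (fun t => t <= M)%N L by apply/allP => t t_in; apply: bounded; rewrite mem_cat t_in.
have xR_le : all (fun t => t <= M)%N (x :: R).
  by apply/allP => t t_in; apply: bounded; rewrite mem_cat t_in orbT.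
set p := fun e : nat => (count_mem e L)%:Z - (count_mem e (x :: R))%:Z.
have rel : \sum_(e < M.+1) (p e)%:~R * r ^+ e = 0.
  under eq_bigr => e _ do rewrite /p intrB mulrBl.
  rewrite sumrB -!sum_powers_by_multiplicity // big_cons sum_eq.
  exact: subrr.
have p_le1 e : (e <= M)%N -> p e <= 1.
  by move=> _; rewrite /p count_uniq_mem //; have := leq_b1 (e \in L); lia.
have x_le : (x <= M)%N by apply: bounded; rewrite mem_cat mem_head orbT.
have := power_relation_trivial _ _ _ num_ge2 den_ge2 p_le1 rel x x_le.
by rewrite /p count_uniq_mem // (negbTE x_notin) /= eqxx; lia.
Qed.

Lemma tail_sum_not_divisible (r : rat) (N : nat -> Prop) (s : nat -> nat) (k n : nat) :
  0 < r -> ~ (exists m : nat, r = m%:R) -> (forall j, (s j < s j.+1)%N) -> (0 < n)%N ->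
  ~ mdivides (in_SrN r N) (r ^+ s k) (\sum_(1 <= i < n.+1) r ^+ s (k + i)%N).
Proof.
move=> r_gt0 r_notnat s_incr n_gt0 /in_SrN_sum [R quot_eq].
have sum_eq : \sum_(1 <= i < n.+1) r ^+ s (k + i)%N = r ^+ s k + \sum_(t <- R) r ^+ t.
  by rewrite -quot_eq addrC subrK.
have den_ge2 := denq_ge2 _ r_gt0 r_notnat.
have [num1|num_ge2] : numq r = 1 \/ 2 <= numq r by have := numq_gt0 r; rewrite r_gt0; lia.
- have r_half : 2 * r <= 1.
    have r_den : r * (denq r)%:~R = 1.
      by rewrite -[X in X * _]divq_num_den num1 mul1r mulVf // intr_eq0 denq_neq0.
    have : (2 : rat) <= (denq r)%:~R by rewrite (ler_int _ 2).
    nra.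
  have := increasing_tail_lt _ _ k _ r_gt0 r_half s_incr n_gt0.
  have : 0 <= \sum_(t <- R) r ^+ t by apply: sumr_ge0 => t _; rewrite exprn_ge0 ?ltW.
  by rewrite sum_eq; lra.
- have s_inj : injective s := inc_inj (le_mono (homo_ltn ltn_trans s_incr)).
  set L := [seq s (k + i)%N | i <- iota 1 n].
  have L_uniq : uniq L by rewrite map_inj_uniq ?iota_uniq // => i j /s_inj /addnI.
  have sk_notin : s k \notin L.
    by apply/mapP => -[i]; rewrite mem_iota => /andP [i_ge1 _] /s_inj; lia.
  have := distinct_powers_rigid _ _ R _ num_ge2 den_ge2 L_uniq sk_notin.
  by rewrite big_map -sum_eq /index_iota subSS subn0 eqxx.
Qed.

Lemma power_not_unit (r : rat) (N : nat -> Prop) (e : nat) :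
  0 < r -> ~ is_unit (in_SrN r N) (r ^+ e).
Proof.
move=> r_gt0 [_ /(in_SrN_ge0 _ _ _ (ltW r_gt0))].
by rewrite oppr_ge0 leNgt exprn_gt0.
Qed.

Theorem mainTheorem17 (r : rat) (N : nat -> Prop) (s : nat -> nat) :
  0 < r ->
  ~ (exists m : nat, r = m%:R) ->
  numerical_monoid N ->
  enumerates N s ->
  atomic (in_SrN r N) ->
  (forall k n : nat, (0 < n)%N ->
     ~ mdivides (in_SrN r N) (r ^+ s k)
         (\sum_(1 <= i < n.+1) r ^+ s (k + i)%N))
  /\ ~ strongly_primary (in_SrN r N).
Proof.
move=> r_gt0 r_notnat _ [s_incr s_enum] _.
have not_div := fun k n => @tail_sum_not_divisible r N s k n r_gt0 r_notnat s_incr.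
split=> // -[_ primary].
have gen_in j : in_SrN r N (r ^+ s j).
  by rewrite -[_ ^+ _]addr0; apply: SrN_add (SrN0 r N); apply/s_enum; exists j.
have [n div_n] := primary _ (gen_in 0%N) (power_not_unit _ N (s 0%N) r_gt0).
have := div_n (fun i => r ^+ s i.+1) (fun i _ => conj (gen_in _) (power_not_unit _ _ _ r_gt0)).
case: n {div_n} => [|n].
  rewrite big_ord0 /mdivides sub0r => neg_in.
  exact: power_not_unit _ N (s 0%N) r_gt0 (conj (gen_in 0%N) neg_in).
suff -> : \sum_(i < n.+1) r ^+ s i.+1 = \sum_(1 <= i < n.+2) r ^+ s (0 + i)%N.
  exact: not_div.
by rewrite big_add1 /= big_mkord.
Qed.
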